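(* Let $A\in M_{n}(\mathbb{R})$ be a non-singular $n\times n$ matrix that is properly arranged. Then $A$ is diagonally eliminable.
   Context: Gauss-Jordan procedure: for $A\in M_{m,n}(\mathbb{R})$ set $A^{(0)}=A$. For $k\geq 0$, if $A^{(2k)}=[a^{(2k)}_{ij}]$ is defined and $a^{(2k)}_{k+1,k+1}\neq 0$, let $\mathcal{G}_{2k+1}$ be the $m\times m$ diagonal matrix with all diagonal entries $1$ except the $(k+1,k+1)$ entry, which is $1/a^{(2k)}_{k+1,k+1}$, and set $A^{(2k+1)}=\mathcal{G}_{2k+1}A^{(2k)}=[a^{(2k+1)}_{ij}]$; then let $\mathcal{G}_{2k+2}=[g_{ij}]_{m\times m}$ with $g_{ii}=1$, $g_{i,k+1}=-a^{(2k+1)}_{i,k+1}$ for $i\neq k+1$, and all other entries $0$, and set $A^{(2k+2)}=\mathcal{G}_{2k+2}A^{(2k+1)}$. A matrix $A\in M_{m,n}(\mathbb{R})$ of rank $r\geq 1$ is diagonally eliminable up to $r$ if for each $k=1,\dots,r$ the matrix $A^{(2k-2)}$ is defined and $a^{(2k-2)}_{kk}\neq 0$; it is diagonally eliminable if moreover $r=m\leq n$. Minors: $m^{i_1\dots i_p}_{j_1\dots j_p}$ (increasing indices) is the determinant of the submatrix of $A$ with rows $i_1,\dots,i_p$ and columns $j_1,\dots,j_p$; $m_k=m^{1\dots k}_{1\dots k}$. $A$ (of rank $\geq 1$) is properly arranged if $|a_{ij}|\leq|a_{11}|$ for all $i,j$, and for every integer $k$ with $1\leq k<\min\{m,n\}$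 one has $|m^{1\dots k\,i}_{1\dots k\,j}|\leq|m_{k+1}|$ for all $k+1\leq i\leq m$, $k+1\leq j\leq n$. *)

From HB Require Import structures.
From mathcomp Require Import all_boot all_order all_algebra.
Set Implicit Arguments. Unset Strict Implicit. Unset Printing Implicit Defensive.
Import Order.TTheory GRing.Theory Num.Theory.
Local Open Scope ring_scope.

Section GaussJordan.
Variables (R : realFieldType) (m n : nat).

(* Entry of B at 0-based nat indices (i, j); 0 when out of range.
   The paper's a_{i+1, j+1} is  mx_ent B i j. *)
Definition mx_ent (B : 'M[R]_(m, n)) (i j : nat) : R :=
  match (insub i : option 'I_m), (insub j : option 'I_n) with
  | Some i', Some j' => B i' j'
  | _, _ => 0
  end.

(* G_{2k+1}: diagonal, all ones except entry (k+1,k+1) = 1/p (0-based k). *)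
Definition gj_G1 (p : R) (k : nat) : 'M[R]_m :=
  \matrix_(i < m, j < m)
     if i == j then (if (i : nat) == k then p^-1 else 1) else 0.

(* G_{2k+2}: g_ii = 1, g_{i,k+1} = - a^{(2k+1)}_{i,k+1} for i <> k+1, else 0. *)
Definition gj_G2 (B : 'M[R]_(m, n)) (k : nat) : 'M[R]_m :=
  \matrix_(i < m, j < m)
     if i == j then 1 else if (j : nat) == k then - mx_ent B i k else 0.

Fixpoint gj (A : 'M[R]_(m, n)) (t : nat) : option 'M[R]_(m, n) :=
  match t with
  | 0 => Some A
  | t'.+1 =>
    match gj A t' with
    | None => None
    | Some B =>
      let k := t'./2 in
      if odd t' then Some (gj_G2 B k *m B)            (* t = 2k+2 *)
      else if mx_ent B k k != 0                       (* t = 2k+1 *)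
           then Some (gj_G1 (mx_ent B k k) k *m B)
           else None
    end
  end.

Definition diag_elim_upto (A : 'M[R]_(m, n)) (r : nat) : Prop :=
  forall k : nat, (1 <= k <= r)%N ->
    exists B, gj A (2 * k - 2) = Some B /\ mx_ent B k.-1 k.-1 != 0.

Definition diag_eliminable (A : 'M[R]_(m, n)) : Prop :=
  (0 < \rank A)%N /\ diag_elim_upto A (\rank A) /\ \rank A = m /\ (m <= n)%N.

Definition lead_minor (A : 'M[R]_(m, n)) (p : nat) : R :=
  \det (\matrix_(s < p, t < p) mx_ent A s t).

(* m^{1..k i}_{1..k j} for 1-based i,j >= k+1; here i, j are 0-based (>= k). *)
Definition ext_minor (A : 'M[R]_(m, n)) (k i j : nat) : R :=
  \det (\matrix_(s < k.+1, t < k.+1)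
          mx_ent A (if (s < k)%N then (s : nat) else i) (if (t < k)%N then (t : nat) else j)).

Definition properly_arranged (A : 'M[R]_(m, n)) : Prop :=
  (0 < \rank A)%N /\
  (forall (i : 'I_m) (j : 'I_n), `|A i j| <= `|mx_ent A 0 0|) /\
  (forall k : nat, (1 <= k)%N -> (k < minn m n)%N ->
     forall i j : nat, (k <= i < m)%N -> (k <= j < n)%N ->
       `|ext_minor A k i j| <= `|lead_minor A k.+1|).

End GaussJordan.

From HB Require Import structures.
From mathcomp Require Import all_boot all_order all_algebra.
Import Order.TTheory GRing.Theory Num.Theory.
Local Open Scope ring_scope.
Set Implicit Arguments. Unset Strict Implicit.

(* Nonsingularity and proper arrangement force every leading principal minor
   m_k to be nonzero: if m_k <> 0 = m_(k+1), the arrangement bound kills every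
   bordered minor m^(1..k,k+1)_(1..k,j), and expanding these along their last
   column exhibits row k+1 of A as a combination of rows 1..k, so det A = 0.
   On the elimination side, A^(2k) = E A where E agrees with the identity
   outside its first k columns, and the first k columns of A^(2k) are unit
   vectors; comparing leading minors of both sides yields the pivot formula
   a^(2k)_(k+1,k+1) m_k = m_(k+1), so no pivot vanishes. *)

Section Entries.
Variables (R : realFieldType) (m n : nat).
Implicit Type B : 'M[R]_(m, n).

Lemma mx_entE B (i : 'I_m) (j : 'I_n) : mx_ent B i j = B i j.
Proof. by rewrite /mx_ent !valK. Qed.

Lemma mx_ent_ord B i j (lt_im : (i < m)%N) (lt_jn : (j < n)%N) :
  mx_ent B i j = B (Ordinal lt_im) (Ordinal lt_jn).
Proof. exact: (mx_entE B (Ordinal lt_im) (Ordinal lt_jn)). Qed.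

Lemma mx_ent_eq0 B i j : (m <= i)%N || (n <= j)%N -> mx_ent B i j = 0.
Proof.
rewrite /mx_ent => /orP[le_mi | le_nj]; first by rewrite insubF // ltnNge le_mi.
by case: insub => // ?; rewrite insubF // ltnNge le_nj.
Qed.

Lemma mx_ent_unit_col B k :
    (forall (i : 'I_m) (j : 'I_n), (j < k)%N -> B i j = (i == j :> nat)%:R) ->
  forall i j, (i < m)%N -> (j < k)%N -> (j < n)%N -> mx_ent B i j = (i == j)%:R.
Proof. by move=> Bk i j lt_im lt_jk lt_jn; rewrite (mx_ent_ord _ lt_im lt_jn) Bk. Qed.

End Entries.

Lemma mx_ent_mul (R : realFieldType) m n p (E : 'M[R]_(m, n)) (B : 'M[R]_(n, p)) s t :
  mx_ent (E *m B) s t = \sum_(l < n) mx_ent E s l * mx_ent B l t.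
Proof.
have [lt_sm | le_ms] := ltnP s m; last first.
  by rewrite mx_ent_eq0 ?le_ms // big1 // => l _; rewrite mx_ent_eq0 ?le_ms ?mul0r.
have [lt_tp | le_pt] := ltnP t p; last first.
  rewrite mx_ent_eq0 ?le_pt ?orbT // big1 // => l _.
  by rewrite (mx_ent_eq0 B) ?le_pt ?orbT ?mulr0.
rewrite -[s]/(Ordinal lt_sm : nat) -[t]/(Ordinal lt_tp : nat) mx_entE mxE.
by apply: eq_bigr => l _; rewrite !mx_entE.
Qed.

Definition lead_mx (R : realFieldType) m n (B : 'M[R]_(m, n)) q : 'M[R]_q :=
  \matrix_(s < q, t < q) mx_ent B s t.

Section LeadingBlocks.
Variables (R : realFieldType) (m n : nat).

Lemma lead_minorE (B : 'M[R]_(m, n)) q : lead_minor B q = \det (lead_mx B q).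
Proof. by []. Qed.

Lemma lead_mx_mul (E : 'M[R]_m) (B : 'M[R]_(m, n)) k q : (k <= q <= m)%N ->
    (forall i j : 'I_m, (k <= j)%N -> E i j = (i == j)%:R) ->
  lead_mx (E *m B) q = lead_mx E q *m lead_mx B q.
Proof.
move=> /andP[le_kq le_qm] Ek; apply/matrixP => s t; rewrite !mxE mx_ent_mul.
transitivity (\sum_(l < q) mx_ent E s l * mx_ent B l t); last first.
  by apply: eq_bigr => l _; rewrite !mxE.
rewrite [RHS](big_ord_widen m (fun l => mx_ent E s l * mx_ent B l t)) //.
rewrite (bigID (fun l : 'I_m => (l < q)%N)) /= [X in _ + X]big1 ?addr0 // => l.
rewrite -leqNgt => le_ql; have lt_sm := leq_trans (ltn_ord s) le_qm.
rewrite (mx_ent_ord E lt_sm (ltn_ord l)) Ek ?(leq_trans le_kq) //=.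
by rewrite -val_eqE /= ltn_eqF ?mul0r // (leq_trans (ltn_ord s) le_ql).
Qed.

Section UnitColumns.
Variables (B : 'M[R]_(m, n)) (k : nat).
Hypothesis le_kn : (k <= n)%N.
Hypothesis unit_colsB :
  forall (i : 'I_m) (j : 'I_n), (j < k)%N -> B i j = (i == j :> nat)%:R.

Lemma lead_minor_unit_cols : (k <= m)%N -> lead_minor B k = 1.
Proof.
move=> le_km; rewrite lead_minorE -(det1 R k); congr (\det _); apply/matrixP => s t.
by rewrite !mxE (mx_ent_unit_col unit_colsB) ?(leq_trans _ le_km) ?(leq_trans _ le_kn).
Qed.

Lemma lead_minorS_unit_cols : (k < m)%N -> lead_minor B k.+1 = mx_ent B k k.
Proof.
move=> lt_km; have lt_m s (le_sk : (s <= k)%N) : (s < m)%N := leq_ltn_trans le_sk lt_km.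
have Bunit s t : (s <= k)%N -> (t < k)%N -> mx_ent B s t = (s == t)%:R.
  by move=> le_sk lt_tk; rewrite (mx_ent_unit_col unit_colsB) ?lt_m ?(leq_trans lt_tk).
rewrite lead_minorE -det_tr det_trig; last first.
  apply/is_trig_mxP => s t lt_st.
  by rewrite !mxE Bunit ?gtn_eqF ?(leq_trans lt_st) //; apply: ltn_ord t.
rewrite big_ord_recr /= big1 ?mul1r ?mxE // => s _.
by rewrite !mxE /= Bunit ?eqxx // ltnW.
Qed.

End UnitColumns.

Lemma lead_minorS_unit_col (B : 'M[R]_(m, n)) k : (k < m)%N ->
    (forall i : 'I_m, mx_ent B i k = (i == k :> nat)%:R) ->
  lead_minor B k.+1 = lead_minor B k.
Proof.
move=> lt_km Bk; rewrite !lead_minorE (expand_det_col _ ord_max) big_ord_recr /=.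
rewrite big1 ?add0r => [|s _]; last first.
  by rewrite mxE (Bk (Ordinal (ltn_trans (ltn_ord s) lt_km))) /= ltn_eqF ?mul0r.
rewrite mxE (Bk (Ordinal lt_km)) eqxx mul1r /cofactor /= addnn -signr_odd odd_double mul1r.
by congr (\det _); apply/matrixP => s t; rewrite !mxE !lift_max.
Qed.

End LeadingBlocks.

Lemma pid_mx_mulE (R : realFieldType) m n r (B : 'M[R]_(m, n)) : (r <= m)%N ->
  pid_mx r *m B = \matrix_(s < r, j < n) mx_ent B s j.
Proof.
move=> le_rm; apply/matrixP => s j; have lt_sm := leq_trans (ltn_ord s) le_rm.
rewrite !mxE (bigD1 (Ordinal lt_sm)) //= mxE eqxx ltn_ord mul1r big1 ?addr0.
  by rewrite -(mx_entE B (Ordinal lt_sm) j).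
by move=> l; rewrite /pid_mx mxE -val_eqE /= eq_sym => /negPf->; rewrite mul0r.
Qed.

Lemma det_eq0_lead_rows (R : realFieldType) n (A : 'M[R]_n) r (c : 'rV[R]_r) :
  (r <= n)%N -> c != 0 -> c *m \matrix_(s < r, j < n) mx_ent A s j = 0 -> \det A = 0.
Proof.
move=> le_rn nz_c cA0; apply/eqP/det0P; exists (c *m pid_mx r).
  by rewrite mulmx_free_eq0 // /row_free rank_pid_mx.
by rewrite -mulmxA pid_mx_mulE.
Qed.

Lemma ext_minor_lt (R : realFieldType) m n (A : 'M[R]_(m, n)) k i j :
  (j < k)%N -> ext_minor A k i j = 0.
Proof.
move=> lt_jk; rewrite /ext_minor -det_tr.
apply: (@determinant_alternate _ _ _ (Ordinal (ltnW lt_jk : (j < k.+1)%N)) ord_max).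
  by rewrite -val_eqE /= ltn_eqF.
by move=> s; rewrite !mxE /= lt_jk ltnn.
Qed.

Lemma det_eq0_ext_minors (R : realFieldType) n (A : 'M[R]_n) k : (k < n)%N ->
    lead_minor A k != 0 -> (forall j, (k <= j < n)%N -> ext_minor A k k j = 0) ->
  \det A = 0.
Proof.
move=> lt_kn nz_mk ext0.
pose M j : 'M[R]_k.+1 := \matrix_(s, t) mx_ent A s (if (t < k)%N then (t : nat) else j).
have detM j : (j < n)%N -> \det (M j) = 0.
  move=> lt_jn; have -> : \det (M j) = ext_minor A k k j.
    congr (\det _); apply/matrixP => s t; rewrite !mxE; have [//|le_ks] := ltnP s k.
    by congr (mx_ent _ _ _); apply/eqP; rewrite eqn_leq le_ks -ltnS ltn_ord.
  have [lt_jk|le_kj] := ltnP j k; first exact: ext_minor_lt.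
  by apply: ext0; rewrite le_kj.
(* The cofactors along the last column of M j do not depend on j; they give a
   dependence among the first k+1 rows of A, nontrivial as the last one is m_k. *)
have cofM j s : cofactor (M j) s ord_max = cofactor (M k) s ord_max.
  by congr (_ * \det _); apply/matrixP => s' t; rewrite !mxE lift_max ltn_ord.
apply: (@det_eq0_lead_rows _ _ _ _ (\row_s cofactor (M k) s ord_max) lt_kn).
  apply: contraNneq nz_mk => /matrixP/(_ 0 ord_max); rewrite !mxE /cofactor /=.
  rewrite addnn -signr_odd odd_double mul1r => <-.
  by apply/eqP; congr (\det _); apply/matrixP => s t; rewrite !mxE !lift_max !ltn_ord.
apply/matrixP => i j; rewrite !mxE -[RHS](detM j (ltn_ord j)) (expand_det_col _ ord_max).
by apply: eq_bigr => s _; rewrite !mxE ltnn cofM mulrC.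
Qed.

Lemma properly_arranged_lead_minor_neq0 (R : realFieldType) n (A : 'M[R]_n) :
    A \in unitmx -> properly_arranged A ->
  forall k, (k <= n)%N -> lead_minor A k != 0.
Proof.
move=> unitA [rkA [le_a00 le_mk]]; elim=> [_|k IHk lt_kn].
  by rewrite /lead_minor det_mx00 oner_eq0.
case: k IHk lt_kn => [_ lt_0n|k IHk lt_kn].
  apply: contraTneq rkA => a00; suff -> : A = 0 by rewrite mxrank0.
  apply/matrixP => i j; rewrite mxE; apply/eqP; rewrite -normr_le0.
  by rewrite -(normr0 R) -a00 /lead_minor det_mx11 mxE; apply: le_a00.
apply: contraTneq unitA => mk0; rewrite unitmxE unitfE negbK; apply/eqP.
apply: (det_eq0_ext_minors lt_kn (IHk (ltnW lt_kn))) => j /andP[le_kj lt_jn].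
apply/eqP; rewrite -normr_le0 -(normr0 R) -mk0 le_mk ?minnn ?leqnn ?le_kj //.
Qed.

Section GaussJordanMatrices.
Variables (R : realFieldType) (m : nat).

Lemma mulmx_unit_col p q (M : 'M[R]_(m, p)) (N : 'M[R]_(p, q)) i (j : 'I_q) (l0 : 'I_p) :
  (forall l : 'I_p, N l j = (l == l0)%:R) -> (M *m N) i j = M i l0.
Proof.
move=> Nj; rewrite mxE (bigD1 l0) //= Nj eqxx mulr1 big1 ?addr0 // => l /negPf ne_l.
by rewrite Nj ne_l mulr0.
Qed.

Lemma gj_G1_col (p : R) k (j : 'I_m) l : (j : nat) != k -> gj_G1 m p k l j = (l == j)%:R.
Proof. by move=> /negPf ne_jk; rewrite mxE; case: eqP => // ->; rewrite ne_jk. Qed.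

Lemma gj_G2_col n (B : 'M[R]_(m, n)) k (j : 'I_m) l :
  (j : nat) != k -> gj_G2 B k l j = (l == j)%:R.
Proof. by move=> /negPf ne_jk; rewrite mxE ne_jk; case: eqP. Qed.

Lemma gj_G1_mulE n p k (B : 'M[R]_(m, n)) i j :
  (gj_G1 m p k *m B) i j = (if (i : nat) == k then p^-1 else 1) * B i j.
Proof.
rewrite mxE (bigD1 i) //= mxE eqxx big1 ?addr0 // => l /negPf ne_li.
by rewrite mxE eq_sym ne_li mul0r.
Qed.

Lemma gj_G2_mulE n q (D : 'M[R]_(m, n)) (k : 'I_m) (B : 'M[R]_(m, q)) i j :
  (gj_G2 D k *m B) i j = if i == k then B i j else B i j - mx_ent D i k * B k j.
Proof.
rewrite mxE; have [-> | ne_ik] := eqVneq i k.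
  rewrite (bigD1 k) //= mxE eqxx mul1r big1 ?addr0 // => l ne_lk.
  by rewrite mxE eq_sym (negPf ne_lk) val_eqE (negPf ne_lk) mul0r.
rewrite (bigD1 i) //= (bigD1 k) 1?eq_sym //= !mxE !eqxx (negPf ne_ik) mul1r.
rewrite big1 ?addr0 ?mulNr // => l /andP[ne_li ne_lk].
by rewrite mxE eq_sym (negPf ne_li) val_eqE (negPf ne_lk) mul0r.
Qed.

End GaussJordanMatrices.

Section GaussJordanInvariant.
Variables (R : realFieldType) (m n : nat) (A : 'M[R]_(m, n)).

Definition gj_step (B : 'M[R]_(m, n)) k : 'M[R]_(m, n) :=
  let C := gj_G1 m (mx_ent B k k) k *m B in gj_G2 C k *m C.

Lemma gj_doubleS k B : gj A k.*2 = Some B -> mx_ent B k k != 0 ->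
  gj A k.+1.*2 = Some (gj_step B k).
Proof.
by move=> gjB nz_p; rewrite doubleS /= gjB odd_double half_double nz_p /= uphalf_double.
Qed.

Definition gj_invariant k (B : 'M[R]_(m, n)) : Prop :=
  (exists2 E : 'M[R]_m, B = E *m A & forall i j : 'I_m, (k <= j)%N -> E i j = (i == j)%:R)
  /\ forall (i : 'I_m) (j : 'I_n), (j < k)%N -> B i j = (i == j :> nat)%:R.

Lemma gj_invariant0 : gj_invariant 0 A.
Proof. by split=> //; exists 1%:M => [|i j _]; rewrite ?mul1mx ?mxE. Qed.

Lemma gj_invariantS k B : gj_invariant k B -> mx_ent B k k != 0 ->
  gj_invariant k.+1 (gj_step B k).
Proof.
move=> [[E BE Eunit] Bunit] nz_p.
have lt_km : (k < m)%N.
  by rewrite ltnNge; apply: contra nz_p => le_mk; rewrite mx_ent_eq0 ?le_mk.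
have lt_kn : (k < n)%N.
  by rewrite ltnNge; apply: contra nz_p => le_nk; rewrite mx_ent_eq0 ?le_nk ?orbT.
pose kr := Ordinal lt_km; pose kc := Ordinal lt_kn.
set p := mx_ent B k k; set C := gj_G1 m p k *m B.
have CE i j : C i j = (if (i : nat) == k then p^-1 else 1) * B i j := gj_G1_mulE _ _ _ _ _.
have Ckk : C kr kc = 1 by rewrite CE eqxx -(mx_ent_ord B lt_km lt_kn) mulVf.
have stepE i j : gj_step B k i j = if i == kr then C i j else C i j - C i kc * C kr j.
  by rewrite /gj_step -/p -/C (gj_G2_mulE C kr) (mx_entE C i kc).
split.
  exists (gj_G2 C k *m gj_G1 m p k *m E); first by rewrite /gj_step -/p -/C /C BE !mulmxA.
  move=> i j lt_kj; have ne_jk : (j : nat) != k by rewrite gtn_eqF.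
  rewrite (mulmx_unit_col _ _ (l0 := j)) => [|l]; last by rewrite Eunit // ltnW.
  rewrite (mulmx_unit_col _ _ (l0 := j)) => [|l]; last exact: gj_G1_col.
  exact: gj_G2_col.
move=> i j; rewrite ltnS leq_eqVlt => /predU1P[jk | lt_jk].
  have -> : j = kc by apply: val_inj.
  rewrite stepE Ckk mulr1 subrr; have [->|] := eqVneq i kr; first by rewrite Ckk eqxx.
  by rewrite -val_eqE /= => /negPf->.
have Ckj : C kr j = 0 by rewrite CE Bunit //= (gtn_eqF lt_jk) mulr0.
rewrite stepE Ckj mulr0 subr0 if_same CE Bunit //.
case: ifP => [/eqP eq_ik|_]; last by rewrite mul1r.
by rewrite eq_ik gtn_eqF ?mulr0.
Qed.

Lemma gj_invariant_pivot k B : gj_invariant k B -> (k < m)%N -> (k <= n)%N ->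
  mx_ent B k k * lead_minor A k = lead_minor A k.+1.
Proof.
move=> [[E BE Eunit] Bunit] lt_km le_kn.
have lead_mul q : (k <= q <= m)%N -> lead_minor B q = lead_minor E q * lead_minor A q.
  by move=> kqm; rewrite !lead_minorE BE (lead_mx_mul _ kqm Eunit) det_mulmx.
have Ek (i : 'I_m) : mx_ent E i k = (i == k :> nat)%:R.
  by rewrite (mx_ent_ord E (ltn_ord i) lt_km) Eunit.
have mEk : lead_minor E k * lead_minor A k = 1.
  rewrite -lead_mul ?(lead_minor_unit_cols le_kn Bunit (ltnW lt_km)) //.
  by rewrite leqnn ltnW.
rewrite -(lead_minorS_unit_cols le_kn Bunit lt_km) lead_mul ?leqnSn //.
by rewrite (lead_minorS_unit_col lt_km Ek) mulrAC mEk mul1r.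
Qed.

Lemma gj_invariant_pivot_neq0 k B : gj_invariant k B -> (k < m)%N -> (k <= n)%N ->
  lead_minor A k.+1 != 0 -> mx_ent B k k != 0.
Proof.
move=> invB lt_km le_kn; apply: contraNneq => p0.
by rewrite -(gj_invariant_pivot invB) // p0 mul0r.
Qed.

Lemma gj_invariant_exists k : (k <= m)%N -> (k <= n)%N ->
    (forall q, (q < k)%N -> lead_minor A q.+1 != 0) ->
  exists2 B, gj A k.*2 = Some B & gj_invariant k B.
Proof.
elim: k => [|k IHk] le_km le_kn nz_m; first by exists A; last exact: gj_invariant0.
have [B gjB invB] := IHk (ltnW le_km) (ltnW le_kn) (fun q lt_qk => nz_m q (ltnW lt_qk)).
have nz_p := gj_invariant_pivot_neq0 invB le_km (ltnW le_kn) (nz_m k (ltnSn k)).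
by exists (gj_step B k); [exact: gj_doubleS | exact: gj_invariantS].
Qed.

Lemma diag_elim_upto_lead_minors r : (r <= m)%N -> (r <= n)%N ->
  (forall k, (1 <= k <= r)%N -> lead_minor A k != 0) -> diag_elim_upto A r.
Proof.
move=> le_rm le_rn nz_m [//|k] /andP[_ lt_kr].
have [lt_km lt_kn] := (leq_trans lt_kr le_rm, leq_trans lt_kr le_rn).
have nz_mS q : (q <= k)%N -> lead_minor A q.+1 != 0.
  by move=> le_qk; apply: nz_m; rewrite /= (leq_ltn_trans le_qk lt_kr).
have [B gjB invB] :=
  gj_invariant_exists (ltnW lt_km) (ltnW lt_kn) (fun q lt_qk => nz_mS q (ltnW lt_qk)).
exists B; split; first by rewrite mulnS addKn mul2n.
exact: gj_invariant_pivot_neq0 invB lt_km (ltnW lt_kn) (nz_mS k (leqnn k)).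
Qed.

End GaussJordanInvariant.

Theorem corollary2p12 (R : realFieldType) (n : nat) (A : 'M[R]_n) :
  A \in unitmx -> properly_arranged A -> diag_eliminable A.
Proof.
move=> unitA arrA; have rkA := mxrank_unit unitA.
split; first by case: arrA.
rewrite rkA; split=> //; apply: diag_elim_upto_lead_minors => // k /andP[_ le_kn].
exact: properly_arranged_lead_minor_neq0.
Qed.
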